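(* Let $b\in\mathbb{Z}^+$ be odd. Then for all complex $q$ with $|q|<1$, $$\sum_{n=0}^{\infty}N(3,5,4b;8n+9)q^n=4q^{\frac{b-1}2}\varphi(q^6)\psi(q^5)\psi(q^{4b})+4q\varphi(q^{2b})\psi(q^5)\psi(q^{12}).$$
   Context: $\mathbb{Z}^+$ is the set of positive integers. For $a,b,c\in\mathbb{Z}^+$ and nonnegative integer $n$, $N(a,b,c;n)$ denotes the number of triples $(x,y,z)\in\mathbb{Z}^3$ with $n=ax^2+by^2+cz^2$. Ramanujan's theta functions are $\varphi(q)=\sum_{n=-\infty}^{\infty}q^{n^2}$ and $\psi(q)=\sum_{n=0}^{\infty}q^{n(n+1)/2}$ for $|q|<1$. *)

From Stdlib Require Import Reals ZArith List.
From Coquelicot Require Import Coquelicot.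

Definition zrange (n : nat) : list Z :=
  map (fun k => (Z.of_nat k - Z.of_nat n)%Z) (seq 0 (2 * n + 1)).

(* N(a,b,c;n) = #{(x,y,z) in Z^3 : n = a x^2 + b y^2 + c z^2}, for a,b,c >= 1.
   Every solution has |x|,|y|,|z| <= x^2 <= n, so it suffices to count
   solutions in the box [-n,n]^3. *)
Definition Nrep (a b c : Z) (n : nat) : nat :=
  list_sum (map (fun x => list_sum (map (fun y => list_sum (map (fun z =>
     if Z.eqb (a*x*x + b*y*y + c*z*z)%Z (Z.of_nat n) then 1%nat else 0%nat)
     (zrange n))) (zrange n))) (zrange n)).

Definition CSeries (u : nat -> C) : C :=
  (Series (fun n => fst (u n)), Series (fun n => snd (u n))).

(* Bilateral sum over Z, summed symmetrically: term 0, then f n + f (-n). *)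
Definition zsym (f : Z -> C) (n : nat) : C :=
  match n with
  | O => f 0%Z
  | S _ => Cplus (f (Z.of_nat n)) (f (- Z.of_nat n)%Z)
  end.

Definition rphi (q : C) : C :=
  CSeries (zsym (fun m => Cpow q (Z.to_nat (m * m)))).
Definition rpsi (q : C) : C :=
  CSeries (fun n => Cpow q (n * (n + 1) / 2)).

(* Since b = 2s + 1 is odd, reducing 3x² + 5y² + 4bz² = 8n + 9 modulo 8 forces y odd, and
   either x ≡ 0 (mod 4) with z odd, or x ≡ 2 (mod 4) with z even.  An odd number is ±(2k + 1),
   with square 8T_k + 1 where T_k = k(k + 1)/2.  In the first case x = 4u and the equation
   becomes n = s + 6u² + 5T_k + 4bT_m; in the second x = ±2(2m + 1), z = 2u and it becomes
   n = 1 + 2bu² + 5T_k + 12T_m.  The two free signs give the factor 4, and the numbers of such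
   (u, k, m) are the coefficients of q^s φ(q⁶)ψ(q⁵)ψ(q^{4b}) and q φ(q^{2b})ψ(q⁵)ψ(q¹²),
   since coefficients of products of absolutely convergent power series are convolutions. *)

From Stdlib Require Import Reals ZArith Bool List Permutation Lia Classical.
From Coquelicot Require Import Coquelicot.
Import ListNotations.

Section FiniteSums.
Local Open Scope nat_scope.

Definition sumL {T : Type} (L : list T) (f : T -> nat) : nat := list_sum (map f L).

Lemma sumL_cons {T} (x : T) L f : sumL (x :: L) f = f x + sumL L f.
Proof. reflexivity. Qed.

Lemma sumL_app {T} (L M : list T) f : sumL (L ++ M) f = sumL L f + sumL M f.
Proof. unfold sumL. now rewrite map_app, list_sum_app. Qed.

Lemma sumL_ext {T} (L : list T) f g :
  (forall x, In x L -> f x = g x) -> sumL L f = sumL L g.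
Proof. intro H. unfold sumL. now rewrite (map_ext_in f g L H). Qed.

Lemma sumL_zero {T} (L : list T) f : (forall x, In x L -> f x = 0) -> sumL L f = 0.
Proof.
  intro H. rewrite (sumL_ext L f (fun _ => 0) H). clear H.
  induction L as [|a L IH]; [reflexivity|]. now rewrite sumL_cons, IH.
Qed.

Lemma sumL_add {T} (L : list T) f g :
  sumL L (fun x => f x + g x) = sumL L f + sumL L g.
Proof. induction L as [|a L IH]; [reflexivity|]. rewrite !sumL_cons, IH. lia. Qed.

Lemma sumL_mult_l {T} (L : list T) c f : c * sumL L f = sumL L (fun x => c * f x).
Proof. induction L as [|a L IH]; [apply Nat.mul_0_r|]. rewrite !sumL_cons, <- IH. lia. Qed.

Lemma sumL_mult_r {T} (L : list T) c f : sumL L f * c = sumL L (fun x => f x * c).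
Proof. rewrite Nat.mul_comm, sumL_mult_l. apply sumL_ext. intros; lia. Qed.

Lemma sumL_swap {T U} (L : list T) (M : list U) f :
  sumL L (fun x => sumL M (f x)) = sumL M (fun y => sumL L (fun x => f x y)).
Proof.
  induction L as [|a L IH].
  - symmetry. now apply sumL_zero.
  - rewrite sumL_cons, IH, <- sumL_add. reflexivity.
Qed.

Lemma sumL_prod {T U} (L : list T) (M : list U) f :
  sumL (list_prod L M) f = sumL L (fun x => sumL M (fun y => f (x, y))).
Proof.
  induction L as [|a L IH]; [reflexivity|].
  simpl list_prod. rewrite sumL_app, sumL_cons, IH. unfold sumL. now rewrite map_map.
Qed.

Lemma sumL_perm {T} (L L' : list T) f : Permutation L L' -> sumL L f = sumL L' f.
Proof. intro P. apply Permutation_list_sum, Permutation_map, P. Qed.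

Lemma sumL_filter_support {T} (L : list T) f :
  sumL L f = sumL (filter (fun x => negb (f x =? 0)) L) f.
Proof.
  induction L as [|a L IH]; [reflexivity|]. simpl filter.
  destruct (Nat.eqb_spec (f a) 0); simpl; rewrite ?sumL_cons, IH; lia.
Qed.

Lemma sumL_same_support {T} (L L' : list T) f : NoDup L -> NoDup L' ->
  (forall x, f x <> 0 -> In x L <-> In x L') -> sumL L f = sumL L' f.
Proof.
  intros N N' H. rewrite (sumL_filter_support L), (sumL_filter_support L').
  apply sumL_perm, NoDup_Permutation; try apply NoDup_filter; auto.
  intro x. rewrite !filter_In. destruct (Nat.eqb_spec (f x) 0) as [E|E]; simpl.
  - split; intros [_ C]; discriminate.
  - rewrite (H x E). tauto.
Qed.

Lemma sumL_single {T} (L : list T) f a : NoDup L -> In a L ->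
  (forall x, f x <> 0 -> x = a) -> sumL L f = f a.
Proof.
  intros N Ha H. transitivity (sumL [a] f); [|apply Nat.add_0_r].
  apply sumL_same_support; auto using NoDup_cons, NoDup_nil.
  intros x Hx. rewrite (H x Hx). simpl. tauto.
Qed.

Lemma sumL_reindex {T U} (L : list T) (M : list U) (g : T -> U) (f : U -> nat) :
  NoDup L -> NoDup M ->
  (forall x y, In x L -> In y L -> g x = g y -> x = y) ->
  (forall y, f y <> 0 -> In y M <-> exists x, g x = y /\ In x L) ->
  sumL L (fun x => f (g x)) = sumL M f.
Proof.
  intros NL NM Inj H. transitivity (sumL (map g L) f).
  - unfold sumL. now rewrite map_map.
  - apply sumL_same_support; auto using FinFun.Injective_map_NoDup_in.
    intros y Hy. rewrite in_map_iff, (H y Hy). tauto.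
Qed.

Lemma NoDup_list_prod {T U} (L : list T) (M : list U) :
  NoDup L -> NoDup M -> NoDup (list_prod L M).
Proof.
  intros NL NM. induction NL as [|a L Ha NL IH]; simpl; [constructor|].
  apply NoDup_app; auto.
  - apply FinFun.Injective_map_NoDup; auto. intros y y' E. now injection E.
  - intros [x y] H1 H2. apply in_map_iff in H1 as [y' [E _]]. injection E as -> _.
    apply in_prod_iff in H2 as [H2 _]. auto.
Qed.

Lemma zrange_NoDup n : NoDup (zrange n).
Proof. apply FinFun.Injective_map_NoDup; [intros a b E; lia|apply seq_NoDup]. Qed.

Lemma in_zrange n u : In u (zrange n) <-> (- Z.of_nat n <= u <= Z.of_nat n)%Z.
Proof.
  unfold zrange. rewrite in_map_iff. split.
  - intros [k [E Hk]]. apply in_seq in Hk. lia.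
  - intro H. exists (Z.to_nat (u + Z.of_nat n)). rewrite in_seq. lia.
Qed.

End FiniteSums.

Section Counting.
Local Open Scope nat_scope.

Definition fiber_card {T : Type} (L : list T) (E : T -> nat) (n : nat) : nat :=
  sumL L (fun t => Nat.b2n (E t =? n)).

Lemma b2n_eqb_iff (a b c d : nat) :
  (a = b <-> c = d) -> Nat.b2n (a =? b) = Nat.b2n (c =? d).
Proof. intro H. f_equal. apply eq_true_iff_eq. now rewrite !Nat.eqb_eq. Qed.

Lemma fiber_card_same_support {T} (L L' : list T) E n : NoDup L -> NoDup L' ->
  (forall t, E t = n -> In t L <-> In t L') -> fiber_card L E n = fiber_card L' E n.
Proof.
  intros N N' H. apply sumL_same_support; auto.
  intros t Ht. apply H. destruct (Nat.eqb_spec (E t) n); [assumption|].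
  simpl in Ht. congruence.
Qed.

Lemma fiber_card_all {T} (L : list T) E n :
  (forall t, In t L -> E t = n) -> fiber_card L E n = length L.
Proof.
  induction L as [|a L IH]; intro H; [reflexivity|].
  unfold fiber_card. rewrite sumL_cons, (H a), Nat.eqb_refl by (simpl; auto).
  fold (fiber_card L E n). rewrite IH; [reflexivity|]. intros t Ht. apply H. simpl; auto.
Qed.

Definition conv (a b : nat -> nat) (n : nat) : nat :=
  sumL (seq 0 (S n)) (fun k => a k * b (n - k)).

Lemma sumL_indicator_split (x y m : nat) :
  sumL (seq 0 (S m)) (fun k => Nat.b2n (x =? k) * Nat.b2n (y =? m - k)) =
  Nat.b2n (x + y =? m).
Proof.
  destruct (le_lt_dec x m) as [Hx|Hx].
  - rewrite (sumL_single _ _ x); [|apply seq_NoDup|apply in_seq; lia|].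
    + rewrite Nat.eqb_refl, Nat.mul_1_l. apply b2n_eqb_iff. lia.
    + intros k Hk. destruct (Nat.eqb_spec x k); [auto|simpl in Hk; lia].
  - rewrite sumL_zero.
    + destruct (Nat.eqb_spec (x + y) m); simpl; lia.
    + intros k Hk. apply in_seq in Hk. destruct (Nat.eqb_spec x k); simpl; lia.
Qed.

Lemma conv_fiber_card {A B} (a b : nat -> nat) (La : list A) (Lb : list B) Ea Eb N :
  (forall i, i <= N -> a i = fiber_card La Ea i) ->
  (forall i, i <= N -> b i = fiber_card Lb Eb i) ->
  forall m, m <= N ->
  conv a b m = fiber_card (list_prod La Lb) (fun p => Ea (fst p) + Eb (snd p)) m.
Proof.
  intros Ha Hb m Hm. unfold fiber_card. rewrite sumL_prod.
  transitivity (sumL (seq 0 (S m)) (fun k => sumL La (fun t => sumL Lb (fun u =>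
    Nat.b2n (Ea t =? k) * Nat.b2n (Eb u =? m - k))))).
  - apply sumL_ext. intros k Hk. apply in_seq in Hk.
    rewrite Ha, Hb by lia. unfold fiber_card. rewrite sumL_mult_r.
    apply sumL_ext. intros t _. apply sumL_mult_l.
  - rewrite sumL_swap. apply sumL_ext. intros t _.
    rewrite sumL_swap. apply sumL_ext. intros u _. apply sumL_indicator_split.
Qed.

Definition shift (s : nat) (d : nat -> nat) (n : nat) : nat :=
  if s <=? n then d (n - s) else 0.

Lemma shift_fiber_card {T} (L : list T) E d s n :
  (forall m, m <= n -> d m = fiber_card L E m) ->
  shift s d n = fiber_card L (fun t => E t + s) n.
Proof.
  intro H. unfold shift. destruct (Nat.leb_spec s n).
  - rewrite H by lia. apply sumL_ext. intros t _. apply b2n_eqb_iff. lia.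
  - symmetry. apply sumL_zero. intros t _. destruct (Nat.eqb_spec (E t + s) n); simpl; lia.
Qed.

End Counting.

Section ComplexSeries.

Lemma sum_n_fst (u : nat -> C) N : fst (sum_n u N) = sum_n (fun n => fst (u n)) N.
Proof. induction N as [|N IH]; [now rewrite !sum_O|]. now rewrite !sum_Sn, <- IH. Qed.

Lemma sum_n_snd (u : nat -> C) N : snd (sum_n u N) = sum_n (fun n => snd (u n)) N.
Proof. induction N as [|N IH]; [now rewrite !sum_O|]. now rewrite !sum_Sn, <- IH. Qed.

Lemma is_series_C (u : nat -> C) (l : C) :
  is_series u l <->
  is_series (fun n => fst (u n)) (fst l) /\ is_series (fun n => snd (u n)) (snd l).
Proof.
  pose proof (@filterlim_locally nat _ eventually _ (sum_n u) l) as Hu.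
  pose proof (@filterlim_locally nat _ eventually _ (sum_n (fun n => fst (u n))) (fst l)) as H1.
  pose proof (@filterlim_locally nat _ eventually _ (sum_n (fun n => snd (u n))) (snd l)) as H2.
  unfold is_series. rewrite Hu, H1, H2. split.
  - intro H. split; intro eps; generalize (H eps); apply filter_imp;
      intros N [B1 B2]; [rewrite <- sum_n_fst | rewrite <- sum_n_snd]; assumption.
  - intros [B1 B2] eps. generalize (filter_and _ _ (B1 eps) (B2 eps)). apply filter_imp.
    intros N [G1 G2]. split; [rewrite sum_n_fst | rewrite sum_n_snd]; assumption.
Qed.

Lemma CSeries_unique (u : nat -> C) (l : C) : is_series u l -> CSeries u = l.
Proof.
  intro H. apply is_series_C in H as [H1 H2]. unfold CSeries.
  rewrite (is_series_unique _ _ H1), (is_series_unique _ _ H2). now destruct l.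
Qed.

Lemma ex_series_Rabs_fst (u : nat -> C) :
  ex_series (fun n => Cmod (u n)) -> ex_series (fun n => Rabs (fst (u n))).
Proof.
  apply (@ex_series_le R_AbsRing R_CompleteNormedModule). intro n.
  change (Rabs (Rabs (fst (u n))) <= Cmod (u n)).
  rewrite Rabs_Rabsolu. apply re_le_Cmod.
Qed.

Lemma ex_series_Rabs_snd (u : nat -> C) :
  ex_series (fun n => Cmod (u n)) -> ex_series (fun n => Rabs (snd (u n))).
Proof.
  apply (@ex_series_le R_AbsRing R_CompleteNormedModule). intro n.
  change (Rabs (Rabs (snd (u n))) <= Cmod (u n)).
  rewrite Rabs_Rabsolu. eapply Rle_trans; [apply Rmax_r|apply Rmax_Cmod].
Qed.

Lemma is_series_Cmult (u v : nat -> C) (U V : C) :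
  is_series u U -> is_series v V ->
  ex_series (fun n => Cmod (u n)) -> ex_series (fun n => Cmod (v n)) ->
  is_series (fun n => sum_n (fun k => Cmult (u k) (v (n - k)%nat)) n) (Cmult U V).
Proof.
  intros HU HV AU AV.
  apply is_series_C in HU as [HU1 HU2]. apply is_series_C in HV as [HV1 HV2].
  pose proof (ex_series_Rabs_fst _ AU) as AU1. pose proof (ex_series_Rabs_snd _ AU) as AU2.
  pose proof (ex_series_Rabs_fst _ AV) as AV1. pose proof (ex_series_Rabs_snd _ AV) as AV2.
  apply is_series_C. split.
  - eapply is_series_ext;
      [|apply (is_series_minus _ _ _ _ (is_series_mult _ _ _ _ HU1 HV1 AU1 AV1)
                                       (is_series_mult _ _ _ _ HU2 HV2 AU2 AV2))].
    intro n. rewrite sum_n_fst, sum_n_Reals. unfold minus, plus, opp; simpl.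
    rewrite minus_sum. ring.
  - replace (snd (U * V)%C) with (fst U * snd V + snd U * fst V) by (simpl; ring).
    eapply is_series_ext;
      [|apply (is_series_plus _ _ _ _ (is_series_mult _ _ _ _ HU1 HV2 AU1 AV2)
                                      (is_series_mult _ _ _ _ HU2 HV1 AU2 AV1))].
    intro n. rewrite sum_n_snd, sum_n_Reals. unfold plus; simpl.
    rewrite <- plus_sum. apply sum_eq. intros i _. simpl. ring.
Qed.

End ComplexSeries.

Section GeneratingFunctions.

Definition gf_term (d : nat -> nat) (q : C) (n : nat) : C :=
  Cmult (RtoC (INR (d n))) (Cpow q n).

Definition is_gf (d : nat -> nat) (q l : C) : Prop :=
  is_series (gf_term d q) l /\ ex_series (fun n => INR (d n) * Cmod q ^ n).

Lemma Cmod_gf_term d q n : Cmod (gf_term d q n) = INR (d n) * Cmod q ^ n.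
Proof.
  unfold gf_term. rewrite Cmod_mult, Cmod_R, Cmod_pow, Rabs_pos_eq; auto using pos_INR.
Qed.

Lemma is_gf_ext d d' q l : (forall n, d n = d' n) -> is_gf d q l -> is_gf d' q l.
Proof.
  intros E [H1 H2]. split.
  - eapply is_series_ext; [|exact H1]. intro n. unfold gf_term. now rewrite E.
  - eapply ex_series_ext; [|exact H2]. intro n. simpl. now rewrite E.
Qed.

Lemma INR_sumL_seq (f : nat -> nat) n :
  INR (sumL (seq 0 (S n)) f) = sum_f_R0 (fun k => INR (f k)) n.
Proof.
  induction n as [|n IH]; [unfold sumL; simpl; now rewrite Nat.add_0_r|].
  rewrite seq_S, sumL_app, plus_INR, IH. unfold sumL. simpl. now rewrite Nat.add_0_r.
Qed.

Lemma INR_conv a b n :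
  INR (conv a b n) = sum_f_R0 (fun k => INR (a k) * INR (b (n - k)%nat)) n.
Proof. unfold conv. rewrite INR_sumL_seq. apply sum_eq. intros. apply mult_INR. Qed.

Lemma sum_n_RtoC_mult (g : nat -> R) (z : C) n :
  sum_n (fun k => Cmult (RtoC (g k)) z) n = Cmult (RtoC (sum_f_R0 g n)) z.
Proof.
  induction n as [|n IH]; [now rewrite sum_O|].
  rewrite sum_Sn, IH. simpl sum_f_R0. rewrite RtoC_plus. symmetry. apply Cmult_plus_distr_r.
Qed.

Lemma ex_series_conv_abs a b q :
  ex_series (fun n => INR (a n) * Cmod q ^ n) -> ex_series (fun n => INR (b n) * Cmod q ^ n) ->
  ex_series (fun n => INR (conv a b n) * Cmod q ^ n).
Proof.
  assert (Hpos : forall d n, 0 <= INR (d n) * Cmod q ^ n)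
    by (intros d n; apply Rmult_le_pos; [apply pos_INR|apply pow_le, Cmod_ge_0]).
  intros [la Ha] [lb Hb].
  assert (Ea : ex_series (fun n => Rabs (INR (a n) * Cmod q ^ n)))
    by (exists la; eapply is_series_ext; [|exact Ha]; intro n; now rewrite Rabs_pos_eq).
  assert (Eb : ex_series (fun n => Rabs (INR (b n) * Cmod q ^ n)))
    by (exists lb; eapply is_series_ext; [|exact Hb]; intro n; now rewrite Rabs_pos_eq).
  eexists. eapply is_series_ext; [|exact (is_series_mult _ _ _ _ Ha Hb Ea Eb)].
  intro n. rewrite INR_conv, (Rmult_comm _ (Cmod q ^ n)), scal_sum.
  apply sum_eq. intros k Hk.
  replace (Cmod q ^ n) with (Cmod q ^ k * Cmod q ^ (n - k)) by (rewrite <- pow_add; f_equal; lia).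
  ring.
Qed.

Lemma is_gf_conv a b q A B : is_gf a q A -> is_gf b q B -> is_gf (conv a b) q (Cmult A B).
Proof.
  intros [HA AA] [HB AB]. split; [|now apply ex_series_conv_abs].
  assert (AA' : ex_series (fun n => Cmod (gf_term a q n))).
  { eapply ex_series_ext; [|exact AA]. intro n. now rewrite Cmod_gf_term. }
  assert (AB' : ex_series (fun n => Cmod (gf_term b q n))).
  { eapply ex_series_ext; [|exact AB]. intro n. now rewrite Cmod_gf_term. }
  eapply is_series_ext; [|exact (is_series_Cmult _ _ _ _ HA HB AA' AB')].
  intro n. unfold gf_term. rewrite INR_conv, <- sum_n_RtoC_mult.
  apply sum_n_ext_loc. intros k Hk.
  replace (Cpow q n) with (Cmult (Cpow q k) (Cpow q (n - k)))
    by (rewrite <- Cpow_add_r; f_equal; lia).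
  rewrite RtoC_mult.
  (* [sum_n_ext_loc] states this equation in a monoid carrier, where [ring] does not see [C]. *)
  match goal with |- ?x = ?y => change (@eq C x y) end. ring.
Qed.

Lemma is_gf_shift1 d q l : is_gf d q l -> is_gf (shift 1 d) q (Cmult q l).
Proof.
  intros [H1 H2]. split.
  - apply is_series_decr_1.
    assert (Hs : is_series (fun n => gf_term (shift 1 d) q (S n)) (scal q l)).
    { eapply is_series_ext; [|apply (is_series_scal q _ _ H1)].
      intro n. unfold gf_term, shift. simpl. rewrite Nat.sub_0_r.
      unfold scal; simpl; change mult with Cmult. ring. }
    enough (E : @plus C_NormedModule (Cmult q l) (@opp C_NormedModule (gf_term (shift 1 d) q 0))
                = scal q l) by (rewrite E; exact Hs).
    unfold gf_term, shift. simpl. change plus with Cplus. change opp with Copp.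
    unfold scal; simpl; change mult with Cmult. ring.
  - apply ex_series_incr_1. eapply ex_series_ext; [|apply (ex_series_scal (Cmod q) _ H2)].
    intro n. unfold shift. simpl. rewrite Nat.sub_0_r.
    unfold scal; simpl; unfold mult; simpl. ring.
Qed.

Lemma shift_S s d n : shift (S s) d n = shift 1 (shift s d) n.
Proof. unfold shift. destruct n as [|n]; simpl; [reflexivity|]. now rewrite Nat.sub_0_r. Qed.

Lemma is_gf_shift s d q l : is_gf d q l -> is_gf (shift s d) q (Cmult (Cpow q s) l).
Proof.
  intro H. induction s as [|s IH].
  - replace (Cmult (Cpow q 0) l) with l by (simpl; ring).
    eapply is_gf_ext; [|exact H]. intro n. unfold shift. simpl. now rewrite Nat.sub_0_r.
  - replace (Cmult (Cpow q (S s)) l) with (Cmult q (Cmult (Cpow q s) l)) by (simpl; ring).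
    eapply is_gf_ext; [intro n; symmetry; apply shift_S|]. now apply is_gf_shift1.
Qed.

Lemma is_gf_plus a b q A B :
  is_gf a q A -> is_gf b q B -> is_gf (fun n => (a n + b n)%nat) q (Cplus A B).
Proof.
  intros [HA AA] [HB AB]. split.
  - eapply is_series_ext; [|apply (is_series_plus _ _ _ _ HA HB)].
    intro n. unfold gf_term. rewrite plus_INR, RtoC_plus. symmetry. apply Cmult_plus_distr_r.
  - eapply ex_series_ext; [|apply (ex_series_plus _ _ AA AB)].
    intro n. rewrite plus_INR. unfold plus; simpl. ring.
Qed.

Lemma is_gf_scal (c : nat) a q A :
  is_gf a q A -> is_gf (fun n => (c * a n)%nat) q (Cmult (RtoC (INR c)) A).
Proof.
  intros [HA AA]. split.
  - eapply is_series_ext; [|apply (is_series_scal (RtoC (INR c)) _ _ HA)].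
    intro n. unfold gf_term. rewrite mult_INR, RtoC_mult.
    unfold scal; simpl; change mult with Cmult. ring.
  - eapply ex_series_ext; [|apply (ex_series_scal (INR c) _ AA)].
    intro n. rewrite mult_INR. unfold scal; simpl; unfold mult; simpl. ring.
Qed.

Lemma is_gf_bounded d q M : (forall n, (d n <= M)%nat) -> Cmod q < 1 -> exists l, is_gf d q l.
Proof.
  intros Hd Hq. assert (Hq0 : 0 <= Cmod q) by apply Cmod_ge_0.
  assert (Abs : ex_series (fun n => INR (d n) * Cmod q ^ n)).
  { apply (@ex_series_le R_AbsRing R_CompleteNormedModule _ (fun n => INR M * Cmod q ^ n)).
    - intro n. change (Rabs (INR (d n) * Cmod q ^ n) <= INR M * Cmod q ^ n).
      rewrite Rabs_pos_eq by (apply Rmult_le_pos; [apply pos_INR|apply pow_le; auto]).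
      apply Rmult_le_compat_r; [apply pow_le; auto|apply le_INR, Hd].
    - apply (@ex_series_scal R_AbsRing R_CompleteNormedModule).
      apply ex_series_geom. now rewrite Rabs_pos_eq. }
  assert (Conv : ex_series (gf_term d q)).
  { apply (@ex_series_le C_AbsRing C_CompleteNormedModule _ (fun n => INR (d n) * Cmod q ^ n));
      [|exact Abs].
    intro n. change (Cmod (gf_term d q n) <= INR (d n) * Cmod q ^ n).
    rewrite Cmod_gf_term. apply Rle_refl. }
  destruct Conv as [l Hl]. now exists l.
Qed.

Lemma strict_mono_lt (e : nat -> nat) : (forall k, (e k < e (S k))%nat) ->
  forall i j, (i < j)%nat -> (e i < e j)%nat.
Proof.
  intros He i j Hij. induction Hij as [|j Hij IH]; [apply He|]. specialize (He j). lia.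
Qed.

Lemma strict_mono_le (e : nat -> nat) : (forall k, (e k < e (S k))%nat) ->
  forall i j, (i <= j)%nat -> (e i <= e j)%nat.
Proof.
  intros He i j Hij. destruct (Nat.eq_dec i j) as [->|Hne]; [lia|].
  pose proof (strict_mono_lt e He i j). lia.
Qed.

Lemma strict_mono_inj (e : nat -> nat) : (forall k, (e k < e (S k))%nat) ->
  forall i j, e i = e j -> i = j.
Proof.
  intros He i j E. destruct (lt_eq_lt_dec i j) as [[H|H]|H]; auto;
    pose proof (strict_mono_lt e He _ _ H); lia.
Qed.

Section Sparse.
Variables (e w d : nat -> nat).
Hypothesis e_0 : e 0%nat = 0%nat.
Hypothesis e_incr : forall k, (e k < e (S k))%nat.
Hypothesis d_e : forall k, d (e k) = w k.
Hypothesis d_out : forall n, (forall k, e k <> n) -> d n = 0%nat.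

Lemma sum_n_sparse q K :
  sum_n (gf_term d q) (e K) = sum_n (fun k => Cmult (RtoC (INR (w k))) (Cpow q (e k))) K.
Proof.
  assert (Gap : forall K m, (e K + m < e (S K))%nat ->
            sum_n (gf_term d q) (e K + m) = sum_n (gf_term d q) (e K)).
  { intros K' m. induction m as [|m IH]; intro Hm; [now rewrite Nat.add_0_r|].
    rewrite Nat.add_succ_r, sum_Sn, IH by lia.
    unfold gf_term at 2. rewrite d_out.
    - change plus with Cplus. simpl INR. rewrite Cmult_0_l. apply Cplus_0_r.
    - intros k Hk. destruct (le_lt_dec k K') as [H|H].
      + pose proof (strict_mono_le e e_incr k K' H). lia.
      + pose proof (strict_mono_le e e_incr (S K') k H). lia. }
  induction K as [|K IH].
  - rewrite e_0, !sum_O. unfold gf_term. now rewrite <- (d_e 0), e_0.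
  - rewrite sum_Sn, <- IH. specialize (e_incr K) as HK.
    replace (e (S K)) with (S (e K + (e (S K) - e K - 1))) at 1 by lia.
    rewrite sum_Sn, Gap by lia. f_equal.
    replace (S (e K + (e (S K) - e K - 1))) with (e (S K)) by lia.
    unfold gf_term. now rewrite d_e.
Qed.

Lemma is_gf_sparse q M : (forall k, (w k <= M)%nat) -> Cmod q < 1 ->
  exists l, is_gf d q l /\ is_series (fun k => Cmult (RtoC (INR (w k))) (Cpow q (e k))) l.
Proof.
  intros Hw Hq.
  assert (Hd : forall n, (d n <= M)%nat).
  { intro n. destruct (classic (exists k, e k = n)) as [[k <-]|Hn].
    - rewrite d_e. apply Hw.
    - rewrite d_out; [lia|]. intros k Hk. apply Hn. now exists k. }
  destruct (is_gf_bounded d q M Hd Hq) as [l Hl]. exists l. split; [exact Hl|].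
  eapply filterlim_ext; [intro K; apply sum_n_sparse|].
  apply (filterlim_comp _ _ _ e (sum_n (gf_term d q)) eventually eventually (locally l)).
  - now apply eventually_subseq.
  - apply Hl.
Qed.

End Sparse.

End GeneratingFunctions.

Section Theta.
Local Open Scope nat_scope.

Definition tri (k : nat) : nat := k * (k + 1) / 2.

Lemma tri_S k : tri (S k) = tri k + S k.
Proof.
  unfold tri. replace (S k * (S k + 1)) with (k * (k + 1) + S k * 2) by lia.
  now rewrite Nat.div_add by lia.
Qed.

Lemma le_tri k : k <= tri k.
Proof. induction k as [|k IH]; [reflexivity|]. rewrite tri_S. lia. Qed.

Lemma tri_Z k : (2 * Z.of_nat (tri k) = Z.of_nat k * (Z.of_nat k + 1))%Z.
Proof. induction k as [|k IH]; [reflexivity|]. rewrite tri_S. lia. Qed.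

Lemma abs_le_sq (u : Z) : (Z.abs u <= u * u)%Z.
Proof. nia. Qed.

Lemma scaled_square_eq_iff (c : nat) (u : Z) (K : nat) : 1 <= c ->
  c * Z.to_nat (u * u) = c * (K * K) <-> u = Z.of_nat K \/ u = (- Z.of_nat K)%Z.
Proof.
  intro Hc. replace (Z.to_nat (u * u)) with (Z.abs_nat u * Z.abs_nat u) by nia. split.
  - intro H. apply Nat.mul_cancel_l in H; [|lia].
    assert (Z.abs_nat u = K) by (apply Nat.le_antisymm; apply Nat.square_le_mono; lia). lia.
  - intros [-> | ->]; nia.
Qed.

Definition psi_coeff (c n : nat) : nat := fiber_card (seq 0 (S n)) (fun k => c * tri k) n.

Definition phi_coeff (c n : nat) : nat :=
  fiber_card (zrange n) (fun u => c * Z.to_nat (u * u)) n.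

Lemma is_gf_rpsi c q : 1 <= c -> (Cmod q < 1)%R -> is_gf (psi_coeff c) q (rpsi (Cpow q c)).
Proof.
  intros Hc Hq. set (e := fun k => c * tri k).
  assert (He : forall k, e k < e (S k)) by (intro k; unfold e; rewrite tri_S; nia).
  destruct (is_gf_sparse e (fun _ => 1) (psi_coeff c) (Nat.mul_0_r c) He)
    with (q := q) (M := 1) as [l [Hl Hs]]; auto.
  - intro K. unfold psi_coeff, fiber_card. rewrite (sumL_single _ _ K).
    + now rewrite Nat.eqb_refl.
    + apply seq_NoDup.
    + apply in_seq. pose proof (le_tri K). unfold e. nia.
    + intros k Hk. destruct (Nat.eqb_spec (c * tri k) (e K)) as [E|E]; [|simpl in Hk; lia].
      exact (strict_mono_inj e He k K E).
  - intros n Hn. apply sumL_zero. intros k _.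
    destruct (Nat.eqb_spec (c * tri k) n) as [E|E]; [contradiction (Hn k E)|reflexivity].
  - replace (rpsi (Cpow q c)) with l; [exact Hl|]. symmetry. apply CSeries_unique.
    eapply is_series_ext; [|exact Hs]. intro n. simpl INR.
    unfold e, tri. now rewrite Cpow_mult_r, Cmult_1_l.
Qed.

Definition sym_pair (K : nat) : list Z :=
  match K with O => [0%Z] | S _ => [Z.of_nat K; (- Z.of_nat K)%Z] end.

Lemma in_sym_pair K u : In u (sym_pair K) <-> u = Z.of_nat K \/ u = (- Z.of_nat K)%Z.
Proof. destruct K; simpl; split; intuition lia. Qed.

Lemma sym_pair_NoDup K : NoDup (sym_pair K).
Proof.
  destruct K; repeat constructor; simpl; [tauto| |tauto]. intros [H|[]]. lia.
Qed.

Lemma is_gf_rphi c q : 1 <= c -> (Cmod q < 1)%R -> is_gf (phi_coeff c) q (rphi (Cpow q c)).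
Proof.
  intros Hc Hq. set (e := fun k => c * (k * k)).
  assert (He : forall k, e k < e (S k)) by (intro k; unfold e; nia).
  destruct (is_gf_sparse e (fun K => length (sym_pair K)) (phi_coeff c)
              (Nat.mul_0_r c) He) with (q := q) (M := 2) as [l [Hl Hs]]; auto.
  - intro K. unfold phi_coeff. rewrite (fiber_card_same_support _ (sym_pair K)).
    + apply fiber_card_all. intros u Hu. now apply scaled_square_eq_iff, in_sym_pair.
    + apply zrange_NoDup.
    + apply sym_pair_NoDup.
    + intros u Hu. apply scaled_square_eq_iff in Hu; [|exact Hc].
      rewrite in_zrange, in_sym_pair. unfold e. split; [intros _; exact Hu|].
      intros _. nia.
  - intros n Hn. apply sumL_zero. intros u _.
    destruct (Nat.eqb_spec (c * Z.to_nat (u * u)) n) as [E|E]; [|reflexivity].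
    exfalso. apply (Hn (Z.abs_nat u)). rewrite <- E. symmetry.
    apply scaled_square_eq_iff; [exact Hc|lia].
  - intros [|K]; simpl; lia.
  - replace (rphi (Cpow q c)) with l; [exact Hl|]. symmetry. apply CSeries_unique.
    eapply is_series_ext; [|exact Hs]. intros [|K]; unfold e.
    + simpl. now rewrite Nat.mul_0_r, Cmult_1_l.
    + unfold zsym. rewrite Z.mul_opp_opp, <- Nat2Z.inj_mul, Nat2Z.id, <- Cpow_mult_r.
      simpl INR. now rewrite RtoC_plus, Cmult_plus_distr_r, Cmult_1_l.
Qed.

End Theta.

Section ThetaProducts.
Local Open Scope nat_scope.

Definition theta3_coeff (c1 c2 c3 : nat) : nat -> nat :=
  conv (conv (phi_coeff c1) (psi_coeff c2)) (psi_coeff c3).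

Lemma is_gf_theta3 c1 c2 c3 q : 1 <= c1 -> 1 <= c2 -> 1 <= c3 -> (Cmod q < 1)%R ->
  is_gf (theta3_coeff c1 c2 c3) q
    (Cmult (Cmult (rphi (Cpow q c1)) (rpsi (Cpow q c2))) (rpsi (Cpow q c3))).
Proof.
  intros H1 H2 H3 Hq.
  apply is_gf_conv; [apply is_gf_conv|]; auto using is_gf_rphi, is_gf_rpsi.
Qed.

Definition box (n : nat) : list (Z * nat * nat) :=
  list_prod (list_prod (zrange n) (seq 0 (S n))) (seq 0 (S n)).

Definition theta_form (c1 c2 c3 : nat) (p : Z * nat * nat) : nat :=
  let '(u, k, m) := p in c1 * Z.to_nat (u * u) + c2 * tri k + c3 * tri m.

Lemma phi_coeff_fiber_card c N i : 1 <= c -> i <= N ->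
  phi_coeff c i = fiber_card (zrange N) (fun u => c * Z.to_nat (u * u)) i.
Proof.
  intros Hc Hi. apply fiber_card_same_support; try apply zrange_NoDup.
  intros u Hu. rewrite !in_zrange. pose proof (abs_le_sq u). split; intro; nia.
Qed.

Lemma psi_coeff_fiber_card c N i : 1 <= c -> i <= N ->
  psi_coeff c i = fiber_card (seq 0 (S N)) (fun k => c * tri k) i.
Proof.
  intros Hc Hi. apply fiber_card_same_support; try apply seq_NoDup.
  intros k Hk. rewrite !in_seq. pose proof (le_tri k). split; intro; nia.
Qed.

Lemma theta3_coeff_fiber_card c1 c2 c3 N m : 1 <= c1 -> 1 <= c2 -> 1 <= c3 -> m <= N ->
  theta3_coeff c1 c2 c3 m = fiber_card (box N) (theta_form c1 c2 c3) m.
Proof.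
  intros H1 H2 H3 Hm. unfold theta3_coeff.
  rewrite (conv_fiber_card _ _ (list_prod (zrange N) (seq 0 (S N))) (seq 0 (S N))
             (fun p => c1 * Z.to_nat (fst p * fst p) + c2 * tri (snd p)) (fun k => c3 * tri k) N);
    auto using psi_coeff_fiber_card.
  - apply sumL_ext. intros [[u k] m'] _. reflexivity.
  - intros i Hi.
    apply (conv_fiber_card _ _ _ _ (fun u => c1 * Z.to_nat (u * u)) (fun k => c2 * tri k) N);
      auto using phi_coeff_fiber_card, psi_coeff_fiber_card.
Qed.

End ThetaProducts.

Section Parametrization.
Local Open Scope Z_scope.

Definition signed_odd (s : bool) (k : nat) : Z :=
  if s then 2 * Z.of_nat k + 1 else - (2 * Z.of_nat k + 1).

Lemma signed_odd_sq s k : signed_odd s k * signed_odd s k = 8 * Z.of_nat (tri k) + 1.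
Proof. pose proof (tri_Z k). unfold signed_odd. destruct s; nia. Qed.

Lemma signed_odd_inj s k s' k' : signed_odd s k = signed_odd s' k' -> s = s' /\ k = k'.
Proof. unfold signed_odd. destruct s, s'; intro H; try (exfalso; lia); split; auto; lia. Qed.

Lemma signed_odd_surj (c : Z) : exists s k, signed_odd s k = 2 * c + 1.
Proof.
  destruct (Z_le_gt_dec 0 c).
  - exists true, (Z.to_nat c). unfold signed_odd. lia.
  - exists false, (Z.to_nat (- c - 1)). unfold signed_odd. lia.
Qed.

Definition tern_form (b : nat) (p : Z * Z * Z) : Z :=
  let '(x, y, z) := p in 3 * x * x + 5 * y * y + 4 * Z.of_nat b * z * z.

(* Split x, y, z by their residues mod 4, 4 and 2: modulo 8 the equation rules out all
   other cases. *)
Lemma tern_form_mod8 (x y z s N : Z) :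
  3 * x * x + 5 * y * y + 4 * (2 * s + 1) * z * z = 8 * N + 9 ->
  (exists c, y = 2 * c + 1) /\
  ((exists a d, x = 4 * a /\ z = 2 * d + 1) \/ (exists a d, x = 4 * a + 2 /\ z = 2 * d)).
Proof.
  intro H.
  pose proof (Z.div_mod x 4 ltac:(lia)) as Ex. pose proof (Z.mod_pos_bound x 4 ltac:(lia)) as Bx.
  pose proof (Z.div_mod y 4 ltac:(lia)) as Ey. pose proof (Z.mod_pos_bound y 4 ltac:(lia)) as By.
  pose proof (Z.div_mod z 2 ltac:(lia)) as Ez. pose proof (Z.mod_pos_bound z 2 ltac:(lia)) as Bz.
  set (a := x / 4) in *. set (rx := x mod 4) in *.
  set (c := y / 4) in *. set (ry := y mod 4) in *.
  set (d := z / 2) in *. set (rz := z mod 2) in *.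
  clearbody a rx c ry d rz.
  assert (HK : exists K, 8 * K + 3 * rx * rx + 5 * ry * ry + 4 * rz * rz = 8 * N + 9).
  { exists (6*a*a + 3*a*rx + 10*c*c + 5*c*ry + 2*(2*s+1)*(d*d + d*rz) + s*rz*rz).
    rewrite <- H, Ex, Ey, Ez. ring. }
  destruct HK as [K HK].
  assert (rx = 0 \/ rx = 1 \/ rx = 2 \/ rx = 3) as Hrx by lia.
  assert (ry = 0 \/ ry = 1 \/ ry = 2 \/ ry = 3) as Hry by lia.
  assert (rz = 0 \/ rz = 1) as Hrz by lia.
  destruct Hrx as [-> | [-> | [-> | ->]]]; destruct Hry as [-> | [-> | [-> | ->]]];
    destruct Hrz as [-> | ->]; try (exfalso; lia);
    (split; [first [exists (2 * c); lia | exists (2 * c + 1); lia] |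
             first [left; exists a, d; lia | right; exists a, d; lia]]).
Qed.

(* The flag selects a case of [tern_form_mod8]; the other two booleans are the signs of the
   odd coordinates. *)
Definition param (t : bool * bool * bool * (Z * nat * nat)) : Z * Z * Z :=
  let '(tg, s1, s2, (u, k, m)) := t in
  if tg then (4 * u, signed_odd s1 k, signed_odd s2 m)
  else (2 * signed_odd s1 m, signed_odd s2 k, 2 * u).

Definition param_exponent (b s : nat) (t : bool * bool * bool * (Z * nat * nat)) : nat :=
  let '(tg, _, _, p) := t in
  if tg then (theta_form 6 5 (4 * b) p + s)%nat else (theta_form (2 * b) 5 12 p + 1)%nat.

Lemma theta_form_Z c1 c2 c3 u k m :
  Z.of_nat (theta_form c1 c2 c3 (u, k, m)) =
  Z.of_nat c1 * (u * u) + Z.of_nat c2 * Z.of_nat (tri k) + Z.of_nat c3 * Z.of_nat (tri m).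
Proof. unfold theta_form. rewrite !Nat2Z.inj_add, !Nat2Z.inj_mul, Z2Nat.id by nia. ring. Qed.

Lemma tern_form_param b s t : b = (2 * s + 1)%nat ->
  tern_form b (param t) = 8 * Z.of_nat (param_exponent b s t) + 9.
Proof.
  intros ->. destruct t as [[[[|] s1] s2] [[u k] m]]; cbn [param param_exponent tern_form];
    rewrite !Nat2Z.inj_add, theta_form_Z, !Nat2Z.inj_mul.
  - pose proof (signed_odd_sq s1 k). pose proof (signed_odd_sq s2 m). nia.
  - pose proof (signed_odd_sq s1 m). pose proof (signed_odd_sq s2 k). nia.
Qed.

Lemma param_inj t t' : param t = param t' -> t = t'.
Proof.
  destruct t as [[[[|] s1] s2] [[u k] m]], t' as [[[[|] s1'] s2'] [[u' k'] m']];
    cbn [param]; intros [[Hx Hy]%pair_equal_spec Hz]%pair_equal_spec.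
  - destruct (signed_odd_inj _ _ _ _ Hy) as [-> ->], (signed_odd_inj _ _ _ _ Hz) as [-> ->].
    now replace u' with u by lia.
  - exfalso. unfold signed_odd in Hx. destruct s1'; lia.
  - exfalso. unfold signed_odd in Hx. destruct s1; lia.
  - assert (Hx' : signed_odd s1 m = signed_odd s1' m') by lia.
    destruct (signed_odd_inj _ _ _ _ Hx') as [-> ->], (signed_odd_inj _ _ _ _ Hy) as [-> ->].
    now replace u' with u by lia.
Qed.

Lemma param_surj b s x y z N : b = (2 * s + 1)%nat ->
  tern_form b (x, y, z) = 8 * N + 9 -> exists t, param t = (x, y, z).
Proof.
  intros -> H. cbn [tern_form] in H. rewrite Nat2Z.inj_add, Nat2Z.inj_mul in H.
  destruct (tern_form_mod8 x y z (Z.of_nat s) N H)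
    as [[c ->] [[a [d [-> ->]]] | [a [d [-> ->]]]]].
  - destruct (signed_odd_surj c) as [s1 [k Hk]], (signed_odd_surj d) as [s2 [m Hm]].
    exists (true, s1, s2, (a, k, m)). cbn [param]. now rewrite Hk, Hm.
  - destruct (signed_odd_surj a) as [s1 [m Hm]], (signed_odd_surj c) as [s2 [k Hk]].
    exists (false, s1, s2, (d, k, m)). cbn [param]. rewrite Hm, Hk. f_equal; f_equal; ring.
Qed.

End Parametrization.

Section Representations.
Local Open Scope nat_scope.

Definition cube (N : nat) : list (Z * Z * Z) :=
  list_prod (list_prod (zrange N) (zrange N)) (zrange N).

Lemma Nrep_cube a b c N :
  Nrep a b c N =
  sumL (cube N) (fun p => let '(x, y, z) := p in
                          Nat.b2n (a * x * x + b * y * y + c * z * z =? Z.of_nat N)%Z).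
Proof. unfold Nrep, cube. now rewrite !sumL_prod. Qed.

Lemma solution_in_cube (a b c x y z : Z) N : (1 <= a)%Z -> (1 <= b)%Z -> (1 <= c)%Z ->
  (a * x * x + b * y * y + c * z * z = Z.of_nat N)%Z -> In (x, y, z) (cube N).
Proof.
  intros Ha Hb Hc H. unfold cube. rewrite !in_prod_iff, !in_zrange.
  pose proof (abs_le_sq x). pose proof (abs_le_sq y). pose proof (abs_le_sq z).
  assert (x * x <= a * x * x)%Z by nia. assert (y * y <= b * y * y)%Z by nia.
  assert (z * z <= c * z * z)%Z by nia. lia.
Qed.

Lemma theta_form_in_box c1 c2 c3 p n : 1 <= c1 -> 1 <= c2 -> 1 <= c3 ->
  theta_form c1 c2 c3 p <= n -> In p (box n).
Proof.
  destruct p as [[u k] m]. cbn [theta_form]. intros H1 H2 H3 H.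
  unfold box. rewrite !in_prod_iff, in_zrange, !in_seq.
  pose proof (abs_le_sq u). pose proof (le_tri k). pose proof (le_tri m).
  assert (Z.to_nat (u * u) <= c1 * Z.to_nat (u * u)) by nia.
  assert (tri k <= c2 * tri k) by nia. assert (tri m <= c3 * tri m) by nia. lia.
Qed.

Lemma NoDup_bools : NoDup [true; false].
Proof.
  apply NoDup_cons; [simpl; intuition discriminate|]. apply NoDup_cons; [auto|constructor].
Qed.

Definition param_box (n : nat) : list (bool * bool * bool * (Z * nat * nat)) :=
  list_prod (list_prod (list_prod [true; false] [true; false]) [true; false]) (box n).

Lemma param_exponent_in_box b s t n : 1 <= b -> param_exponent b s t = n -> In t (param_box n).
Proof.
  intros Hb H. destruct t as [[[tg s1] s2] p]. unfold param_box.
  assert (Hbool : forall c : bool, In c [true; false]) by (intros []; simpl; auto).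
  rewrite !in_prod_iff. split; [auto|].
  destruct tg; cbn [param_exponent] in H.
  - apply (theta_form_in_box 6 5 (4 * b)); lia.
  - apply (theta_form_in_box (2 * b) 5 12); lia.
Qed.

Lemma sumL_bool (f : bool -> nat) : sumL [true; false] f = f true + f false.
Proof. unfold sumL. simpl. lia. Qed.

Lemma param_box_fiber_card b s n :
  fiber_card (param_box n) (param_exponent b s) n =
  4 * fiber_card (box n) (fun p => theta_form 6 5 (4 * b) p + s) n +
  4 * fiber_card (box n) (fun p => theta_form (2 * b) 5 12 p + 1) n.
Proof.
  unfold param_box, fiber_card. rewrite !sumL_prod.
  repeat (rewrite sumL_bool; cbv beta). cbn [param_exponent]. lia.
Qed.

Lemma Nrep_theta_counts b s n : b = 2 * s + 1 ->
  Nrep 3 5 (4 * Z.of_nat b) (8 * n + 9) =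
  4 * fiber_card (box n) (fun p => theta_form 6 5 (4 * b) p + s) n +
  4 * fiber_card (box n) (fun p => theta_form (2 * b) 5 12 p + 1) n.
Proof.
  intro Hb. rewrite <- param_box_fiber_card, Nrep_cube.
  set (sol := fun p : Z * Z * Z => Nat.b2n (tern_form b p =? Z.of_nat (8 * n + 9))%Z).
  transitivity (sumL (cube (8 * n + 9)) sol).
  { apply sumL_ext. now intros [[x y] z] _. }
  transitivity (sumL (param_box n) (fun t => sol (param t))).
  2:{ apply sumL_ext. intros t _. unfold sol. rewrite (tern_form_param b s t Hb).
      f_equal. apply eq_true_iff_eq. rewrite Nat.eqb_eq, Z.eqb_eq. lia. }
  symmetry. apply sumL_reindex.
  - unfold param_box, box.
    repeat apply NoDup_list_prod; auto using NoDup_bools, zrange_NoDup, seq_NoDup.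
  - unfold cube. repeat apply NoDup_list_prod; apply zrange_NoDup.
  - intros t t' _ _. apply param_inj.
  - intros [[x y] z] Hsol.
    assert (H : tern_form b (x, y, z) = Z.of_nat (8 * n + 9)).
    { unfold sol in Hsol. destruct (Z.eqb_spec (tern_form b (x, y, z)) (Z.of_nat (8 * n + 9)));
        [assumption|simpl in Hsol; lia]. }
    split; intros _.
    + destruct (param_surj b s x y z (Z.of_nat n) Hb) as [t Ht]; [rewrite H; lia|].
      exists t. split; [exact Ht|]. apply (param_exponent_in_box b s); [lia|].
      pose proof (tern_form_param b s t Hb) as E. rewrite Ht, H in E. lia.
    + apply (solution_in_cube 3 5 (4 * Z.of_nat b)); [lia | lia | lia | exact H].
Qed.

Lemma Nrep_gf_coeff b s n : b = 2 * s + 1 ->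
  Nrep 3 5 (4 * Z.of_nat b) (8 * n + 9) =
  4 * shift s (theta3_coeff 6 5 (4 * b)) n + 4 * shift 1 (theta3_coeff (2 * b) 5 12) n.
Proof.
  intro Hb. rewrite (Nrep_theta_counts b s n Hb).
  rewrite (shift_fiber_card (box n) (theta_form 6 5 (4 * b))),
    (shift_fiber_card (box n) (theta_form (2 * b) 5 12));
    [reflexivity| |]; intros m Hm; apply theta3_coeff_fiber_card; lia.
Qed.

End Representations.

Theorem lemma6p4 (b : nat) (hb : (0 < b)%nat) (hodd : Nat.odd b = true)
  (q : C) (hq : (Cmod q < 1)%R) :
  is_series (fun n : nat =>
      Cmult (RtoC (INR (Nrep 3 5 (4 * Z.of_nat b) (8 * n + 9)))) (Cpow q n))
    (Cplus
      (Cmult (Cmult (Cmult (Cmult (RtoC 4) (Cpow q ((b - 1) / 2)))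
         (rphi (Cpow q 6))) (rpsi (Cpow q 5))) (rpsi (Cpow q (4 * b))))
      (Cmult (Cmult (Cmult (Cmult (RtoC 4) q)
         (rphi (Cpow q (2 * b)))) (rpsi (Cpow q 5))) (rpsi (Cpow q 12)))).
Proof.
  destruct (proj1 (Nat.odd_spec b) hodd) as [s Hs].
  replace ((b - 1) / 2)%nat with s
    by (subst b; rewrite Nat.add_sub, Nat.mul_comm, Nat.div_mul; lia).
  pose proof (is_gf_theta3 6 5 (4 * b) q ltac:(lia) ltac:(lia) ltac:(lia) hq) as H1.
  pose proof (is_gf_theta3 (2 * b) 5 12 q ltac:(lia) ltac:(lia) ltac:(lia) hq) as H2.
  destruct (is_gf_plus _ _ _ _ _ (is_gf_scal 4 _ _ _ (is_gf_shift s _ _ _ H1))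
                                 (is_gf_scal 4 _ _ _ (is_gf_shift 1 _ _ _ H2))) as [H _].
  replace (INR 4) with 4%R in H by (simpl; ring).
  rewrite Cpow_1_r in H.
  match type of H with is_series _ ?l => replace (Cplus _ _) with l by ring end.
  eapply is_series_ext; [|exact H]. intro n. unfold gf_term. now rewrite (Nrep_gf_coeff b s n Hs).
Qed.
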